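(* Let $O$ be a set of Boolean functions. The following are equivalent: (1) $O\preceq\{\land,\lor,\top,\bot\}$ or $O\preceq\{\neg,\bot\}$. (2) Every formula $\phi\in\mathrm{PL}_O$ is uniquely characterized with respect to $\mathrm{PL}_O$ by a finite set of labeled examples. (3) There is a function $f:\mathbb{N}\to\mathbb{N}$ such that for all finite sets $\textsc{prop}$ of propositional variables, every $\phi\in\mathrm{PL}_O[\textsc{prop}]$ is uniquely characterized with respect to $\mathrm{PL}_O[\textsc{prop}]$ by a set of $f(|\phi|_{\mathrm{dag}})$ labeled examples.
   Context: A Boolean function is a map $\{0,1\}^n\to\{0,1\}$ with $n\ge 1$; the constants $\top,\bot$ are treated as constant unary Boolean functions. $\land,\lor,\neg$ denote the usual Boolean functions $x\land y$, $x\lor y$, $\neg x$. For a set $O$ of Boolean functions, $\langle O\rangle$ (the clone generated by $O$) is the smallest set of Boolean functions containing $O$ and all projections $\pi^n_k(x_1,\dots,x_n)=x_k$ and closed under composition; $O\preceq O'$ means $\langle O\rangle\subseteq\langle O'\rangle$. Fix a countably infinite set of propositional variables. $\mathrm{PL}_O$ is the set of formulas generated by $\phi::=x\mid f(\phi_1,\dots,\phi_n)$ with $x$ a propositional variable and $f\in O$ of arity $n$; $\mathrm{PL}_O[\textsc{prop}]$ consists of the $\mathrm{PL}_O$-formulas using only variables from $\textsc{prop}$. Given a truth assignment $V$, $[\![x]\!]_V=V(x)$ and $[\![f(\phi_1,\dots,\phi_n)]\!]_V=f([\![\phi_1]\!]_V,\dots,[\![\phi_n]\!]_V)$; two formulas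 are equivalent if they have the same value under every assignment. $|\phi|_{\mathrm{dag}}$ is the number of distinct subformulas of $\phi$. A labeled example is a pair $(V,\mathrm{lab})$ with $V$ a truth assignment and $\mathrm{lab}\in\{0,1\}$; $\phi$ fits it if $[\![\phi]\!]_V=\mathrm{lab}$. A set $E$ of labeled examples uniquely characterizes $\phi$ with respect to a set of formulas $L$ (here $L=\mathrm{PL}_O$ or $L=\mathrm{PL}_O[\textsc{prop}]$) if $\phi$ fits every example in $E$ and every formula of $L$ fitting every example in $E$ is equivalent to $\phi$. *)

From mathcomp Require Import all_boot.
From Stdlib Require List.
From HB Require Import structures.
Set Implicit Arguments. Unset Strict Implicit. Unset Printing Implicit Defensive.

(* Boolean functions {0,1}^n -> {0,1} with n >= 1.  A Boolean function is a *)
(* dependent pair (k, g) with g a finite function on (k+1)-tuples of bools;  *)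
(* its arity is k+1 (this encodes the convention n >= 1).                    *)
Definition BF := {k : nat & {ffun k.+1.-tuple bool -> bool}}.

Definition arity (f : BF) : nat := (tag f).+1.

Definition mkBF (k : nat) (g : {ffun k.+1.-tuple bool -> bool}) : BF :=
  Tagged (fun k => {ffun k.+1.-tuple bool -> bool}) g.

(* application of a Boolean function to a sequence of arguments (meaningful *)
(* only when the sequence has the right length; false otherwise)            *)
Definition bf_apply (f : BF) (s : seq bool) : bool :=
  match insub s : option ((tag f).+1.-tuple bool) with
  | Some t => tagged f t
  | None => false
  end.

Definition bf_and : BF := @mkBF 1 [ffun x => tnth x ord0 && tnth x ord_max].
Definition bf_or  : BF := @mkBF 1 [ffun x => tnth x ord0 || tnth x ord_max].
Definition bf_not : BF := @mkBF 0 [ffun x => ~~ tnth x ord0].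
Definition bf_top : BF := @mkBF 0 [ffun _ => true].
Definition bf_bot : BF := @mkBF 0 [ffun _ => false].

Definition bf_proj (m : nat) (k : 'I_m.+1) : BF := @mkBF m [ffun x => tnth x k].

Definition bf_comp (f : BF) (m : nat)
    (gs : 'I_(arity f) -> {ffun m.+1.-tuple bool -> bool}) : BF :=
  @mkBF m [ffun x => tagged f [tuple gs i x | i < arity f]].

Inductive clone (O : BF -> Prop) : BF -> Prop :=
| clone_base f : O f -> clone O f
| clone_proj m (k : 'I_m.+1) : clone O (bf_proj k)
| clone_comp (f : BF) (m : nat)
    (gs : 'I_(arity f) -> {ffun m.+1.-tuple bool -> bool}) :
    clone O f -> (forall i, clone O (mkBF (gs i))) -> clone O (bf_comp gs).

Definition clone_le (O O' : BF -> Prop) : Prop :=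
  forall f, clone O f -> clone O' f.

Definition set_and_or_top_bot : BF -> Prop :=
  fun f => f = bf_and \/ f = bf_or \/ f = bf_top \/ f = bf_bot.
Definition set_not_bot : BF -> Prop :=
  fun f => f = bf_not \/ f = bf_bot.

Inductive form : Type :=
| Var of nat
| App of BF & seq form.

Section FormInd.
Variable P : form -> Prop.
Hypothesis HV : forall x, P (Var x).
Hypothesis HA : forall f args, List.Forall P args -> P (App f args).
Fixpoint form_ind2 (p : form) : P p :=
  match p with
  | Var x => HV x
  | App f args => HA f
      ((fix go (l : seq form) : List.Forall P l :=
          match l with
          | [::] => List.Forall_nil P
          | a :: l' => List.Forall_cons a (form_ind2 a) (go l')
          end) args)
  end.
End FormInd.

Fixpoint form_eqb (p q : form) : bool :=
  match p, q with
  | Var x, Var y => x == y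
  | App f ps, App g qs => (f == g) && all2 form_eqb ps qs
  | _, _ => false
  end.

Lemma form_eqb_iff (p q : form) : form_eqb p q <-> p = q.
Proof.
elim/form_ind2: p q => [x|f ps IH] [y|g qs] /=; try by split.
- by split=> [/eqP->|[->]].
- have H : all2 form_eqb ps qs <-> ps = qs.
    elim: IH qs => [|a l Ha _ IHl] [|b l'] //=.
    split=> [/andP[/Ha -> /IHl ->]//|[<- <-]].
    by apply/andP; split; [apply/Ha|apply/IHl].
  split=> [/andP[/eqP -> /H ->]//|[-> E]].
  by apply/andP; split; [|apply/H].
Qed.

Lemma form_eqP : Equality.axiom form_eqb.
Proof. by move=> p q; apply: (iffP idP) => /form_eqb_iff. Qed.

HB.instance Definition _ := hasDecEq.Build form form_eqP.

Fixpoint eval (V : nat -> bool) (p : form) : bool :=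
  match p with
  | Var x => V x
  | App f args => bf_apply f (map (eval V) args)
  end.

Definition equiv (p q : form) : Prop := forall V, eval V p = eval V q.

Fixpoint inPL (O : BF -> Prop) (p : form) : Prop :=
  match p with
  | Var _ => True
  | App f args => [/\ O f, size args = arity f
                    & foldr (fun a acc => inPL O a /\ acc) True args]
  end.

Fixpoint vars (p : form) : seq nat :=
  match p with
  | Var x => [:: x]
  | App _ args => flatten (map vars args)
  end.

(* membership in PL_O[prop], for a finite set prop given as a list *)
Definition inPLprop (O : BF -> Prop) (prop : seq nat) (p : form) : Prop :=
  inPL O p /\ {subset vars p <= prop}.

Fixpoint subforms (p : form) : seq form :=
  match p with
  | Var x => [:: Var x]
  | App f args => App f args :: flatten (map subforms args)
  end.

Definition dag_size (p : form) : nat := size (undup (subforms p)).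

Definition example := ((nat -> bool) * bool)%type.

Definition fits (p : form) (e : example) : bool := eval e.1 p == e.2.

Definition uniquely_characterizes (E : seq example) (p : form)
    (L : form -> Prop) : Prop :=
  all (fits p) E /\ (forall q, L q -> all (fits q) E -> equiv q p).

From Pilot Require Import Defs.
From mathcomp Require Import all_boot.
From Stdlib Require Import Classical.
Set Implicit Arguments. Unset Strict Implicit. Unset Printing Implicit Defensive.

(* If every function of O is monotone, or every one depends on at most one argument,
   then so is every formula of PL_O.  Such a formula takes at U the value it takes at
   the least or at the greatest assignment agreeing with U on the variables X of the
   target formula p, so the 2^(|X|+1) examples at these extreme assignments
   characterize p, and |X| <= |p|_dag.
   Otherwise O contains a non-monotone and a non-essentially-unary function, and a
   finite analysis of ternary functions turns them into a "cancelling" formula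
   psi(x, y, z) with psi(x, y, y) = psi(x, x, x) but psi(x, y, z) <> psi(x, x, x)
   for some values.  Given finitely many examples, two of sufficiently many variables
   a, b take the same value in each of them, so psi(x, a, b) fits every example of
   psi(x, x, x) without being equivalent to it. *)

Fixpoint subst (s : nat -> form) (p : form) : form :=
  match p with
  | Var x => s x
  | App f args => App f (map (subst s) args)
  end.

Lemma Forall_mem (P : form -> Prop) l : List.Forall P l -> {in l, forall x, P x}.
Proof. by elim=> // a l' Pa _ IH x; rewrite inE => /predU1P[->|/IH]. Qed.

Lemma eq_in_eval V W p : {in vars p, V =1 W} -> eval V p = eval W p.
Proof.
elim/form_ind2: p => [x /= VW|f args IH /= VW]; first by apply: VW; rewrite inE.
congr bf_apply; apply/eq_in_map => a a_args; apply: (Forall_mem IH a_args) => j ja.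
by apply: VW; apply/flattenP; exists (vars a); rewrite ?map_f.
Qed.

Lemma eq_eval V W p : V =1 W -> eval V p = eval W p.
Proof. by move=> VW; apply: eq_in_eval => j _. Qed.

Lemma eval_subst V s p : eval V (subst s p) = eval (fun j => eval V (s j)) p.
Proof.
elim/form_ind2: p => [//|f args IH /=]; rewrite -map_comp.
by congr bf_apply; apply/eq_in_map => a /(Forall_mem IH).
Qed.

Lemma vars_subst s p j : j \in vars (subst s p) -> exists i, j \in vars (s i).
Proof.
elim/form_ind2: p => [x|f args IH] /=; first by exists x.
by case/flattenP=> _ /mapP[_ /mapP[a a_args ->] ->] /(Forall_mem IH a_args).
Qed.

Lemma inPL_args O args :
  foldr (fun a acc => inPL O a /\ acc) True args <-> {in args, forall a, inPL O a}.
Proof.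
elim: args => [|b args IH] /=; first by split=> // _ ?; rewrite in_nil.
split=> [[Ob /IH Oargs] a|Oargs]; first by rewrite inE => /predU1P[->|/Oargs].
by split; [apply: Oargs; rewrite mem_head | apply/IH => a a_args; apply/Oargs/mem_behead].
Qed.

Lemma inPL_subst O s p : inPL O p -> (forall j, inPL O (s j)) -> inPL O (subst s p).
Proof.
move=> Op Os; elim/form_ind2: p Op => [x _|f args IH [Of size_args /inPL_args Oargs]] /=.
  exact: Os.
split=> //; first by rewrite size_map.
by apply/inPL_args => _ /mapP[a a_args ->]; apply: (Forall_mem IH a_args); apply: Oargs.
Qed.

Lemma bf_apply_tuple (f : BF) (s : seq bool) : size s = arity f ->
  bf_apply f s = tagged f [tuple nth false s i | i < arity f].
Proof.
move=> size_s; rewrite /bf_apply; case: insubP => [t _ val_t|]; last by rewrite size_s eqxx.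
by congr (tagged f _); apply: eq_from_tnth => i; rewrite tnth_mktuple -val_t (tnth_nth false).
Qed.

Lemma bf_andE a b : bf_apply bf_and [:: a; b] = a && b.
Proof. by rewrite bf_apply_tuple //= ffunE !tnth_mktuple. Qed.
Lemma bf_orE a b : bf_apply bf_or [:: a; b] = a || b.
Proof. by rewrite bf_apply_tuple //= ffunE !tnth_mktuple. Qed.
Lemma bf_notE a : bf_apply bf_not [:: a] = ~~ a.
Proof. by rewrite bf_apply_tuple //= ffunE !tnth_mktuple. Qed.
Lemma bf_topE a : bf_apply bf_top [:: a] = true.
Proof. by rewrite bf_apply_tuple //= ffunE. Qed.
Lemma bf_botE a : bf_apply bf_bot [:: a] = false.
Proof. by rewrite bf_apply_tuple //= ffunE. Qed.

Definition represents (p : form) (f : BF) : Prop :=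
  forall V, eval V p = tagged f [tuple V i | i < arity f].

Lemma clone_represented O f : clone O f -> exists2 p, inPL O p & represents p f.
Proof.
elim=> {f} [f Of|m k|f m gs _ [p Op p_f] _ IH].
- pose args := [seq Var i | i <- iota 0 (arity f)].
  exists (App f args).
    by split=> //; [rewrite size_map size_iota | apply/inPL_args => _ /mapP[i _ ->]].
  move=> V; rewrite [LHS]/eval -/eval bf_apply_tuple ?size_map ?size_iota //.
  congr (tagged f _); apply: eq_from_tnth => i; rewrite !tnth_mktuple.
  by rewrite (nth_map (Var 0)) ?size_map ?size_iota // (nth_map 0) ?size_iota // nth_iota.
- by exists (Var k) => // V /=; rewrite ffunE tnth_mktuple.
- have [q Oq q_gs] := fin_all_exists2 IH.
  exists (subst (fun j => q (inord j)) p); first exact: inPL_subst.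
  move=> V; rewrite eval_subst p_f /= ffunE; congr (tagged f _).
  by apply: eq_from_tnth => i; rewrite !tnth_mktuple inord_val q_gs.
Qed.

Lemma tuple_inord n (t : n.+1.-tuple bool) : [tuple tnth t (inord i) | i < n.+1] = t.
Proof. by apply: eq_from_tnth => i; rewrite tnth_mktuple inord_val. Qed.

Lemma clone_of_formula O p m : inPL O p ->
  clone O (@mkBF m [ffun t => eval (fun j => tnth t (inord j)) p]).
Proof.
elim/form_ind2: p => [x _|f args IH [Of size_args /inPL_args Oargs]].
  suff -> : @mkBF m [ffun t => eval (fun j => tnth t (inord j)) (Var x)] =
            @bf_proj m (inord x) by exact: clone_proj.
  by congr mkBF; apply/ffunP => t; rewrite !ffunE.
pose gs (i : 'I_(arity f)) := [ffun t : m.+1.-tuple bool =>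
               eval (fun j => tnth t (inord j)) (nth (Var 0) args i)].
suff -> : @mkBF m [ffun t => eval (fun j => tnth t (inord j)) (App f args)] = @bf_comp f m gs.
  apply: clone_comp => [|i]; first exact: clone_base.
  have args_i : nth (Var 0) args i \in args by rewrite mem_nth // size_args.
  exact: (Forall_mem IH args_i (Oargs _ args_i)).
congr mkBF; apply/ffunP => t; rewrite !ffunE /= bf_apply_tuple ?size_map //.
congr (tagged f _); apply: eq_from_tnth => i.
by rewrite !tnth_mktuple ffunE (nth_map (Var 0)) // size_args.
Qed.

Lemma represented_clone O p f : inPL O p -> represents p f -> clone O f.
Proof.
move=> Op p_f; have := clone_of_formula (tag f) Op.
suff -> : [ffun t => eval (fun j => tnth t (inord j)) p] = tagged f by case: f p_f.
by apply/ffunP => t; rewrite ffunE p_f tuple_inord.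
Qed.

Lemma PL_translate O O' : (forall f, O f -> exists2 p, inPL O' p & represents p f) ->
  forall q, inPL O q -> exists2 q', inPL O' q' & Defs.equiv q' q.
Proof.
move=> O_O'; elim/form_ind2 => [x _|f args IH [Of size_args /inPL_args Oargs]].
  by exists (Var x).
have [args' [size_args' O'args' args'_args]] : exists args', [/\ size args' = size args,
    {in args', forall a, inPL O' a} & forall V, map (eval V) args' = map (eval V) args].
  elim: IH Oargs {size_args} => [|a l IHa _ IHl] Oal; first by exists [::].
  have [a' O'a' a'_a] := IHa (Oal a (mem_head _ _)).
  have [l' [size_l' O'l' l'_l]] := IHl (fun b bl => Oal b (mem_behead (s := a :: l) bl)).
  exists (a' :: l'); split=> [|b|V] /=; rewrite ?size_l' ?a'_a ?l'_l //.
  by rewrite inE => /predU1P[->|/O'l'].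
have [p O'p p_f] := O_O' f Of.
exists (subst (nth (Var 0) args') p).
  apply: inPL_subst => // j; case: (ltnP j (size args')) => [j_lt|j_ge].
    by apply: O'args'; rewrite mem_nth.
  by rewrite nth_default.
move=> V; rewrite eval_subst p_f /= -args'_args bf_apply_tuple ?size_map ?size_args' //.
congr (tagged f _); apply: eq_from_tnth => i.
by rewrite !tnth_mktuple (nth_map (Var 0)) // size_args' size_args.
Qed.

Lemma clone_le_translate O O' q : clone_le O O' -> inPL O q ->
  exists2 q', inPL O' q' & Defs.equiv q' q.
Proof.
move=> OO'; apply: PL_translate => f Of.
exact/clone_represented/OO'/clone_base.
Qed.

Definition mono (p : form) : Prop :=
  forall V W : nat -> bool, (forall j, V j -> W j) -> eval V p -> eval W p.

Definition ess_unary (p : form) : Prop :=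
  exists y (u : bool -> bool), forall V, eval V p = u (V y).

Lemma PL_and_or_mono p : inPL set_and_or_top_bot p -> mono p.
Proof.
elim/form_ind2: p => [x _ V W /(_ x) //|f args IH [Of size_args /inPL_args Oargs] V W VW].
have mono_args a : a \in args -> eval V a -> eval W a.
  by move=> a_args; apply: (Forall_mem IH a_args (Oargs a a_args)).
move: size_args mono_args {IH Oargs}; case: Of => [|[|[|]]] ->;
  case: args => [|a [|b [|? ?]]] /eqP //= _ mono_args;
  rewrite ?bf_andE ?bf_orE ?bf_topE ?bf_botE //.
- have [mono_a mono_b] := (mono_args a (mem_head _ _), mono_args b (mem_last a [:: b])).
  by move=> /andP[/mono_a-> /mono_b->].
- have [mono_a mono_b] := (mono_args a (mem_head _ _), mono_args b (mem_last a [:: b])).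
  by move=> /orP[/mono_a->|/mono_b->]; rewrite ?orbT.
Qed.

Lemma PL_not_bot_ess_unary p : inPL set_not_bot p -> ess_unary p.
Proof.
elim/form_ind2: p => [x _|f args IH [Of size_args /inPL_args Oargs]]; first by exists x, id.
move: size_args IH Oargs; case: Of => ->; case: args => [|a [|? ?]] /eqP //= _ /=.
- move=> /List.Forall_cons_iff[IHa _] /(_ a (mem_head _ _)) /IHa[y [u a_u]].
  by exists y, (negb \o u) => V /=; rewrite bf_notE a_u.
- by exists 0, (fun=> false) => V /=; rewrite bf_botE.
Qed.

Definition and_all (l : seq form) : form :=
  foldr (fun a acc => App bf_and [:: a; acc]) (App bf_top [:: Var 0]) l.
Definition or_all (l : seq form) : form :=
  foldr (fun a acc => App bf_or [:: a; acc]) (App bf_bot [:: Var 0]) l.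

Lemma eval_and_all V l : eval V (and_all l) = all (eval V) l.
Proof. by elim: l => [|a l IH] /=; rewrite ?bf_topE ?bf_andE ?IH. Qed.
Lemma eval_or_all V l : eval V (or_all l) = has (eval V) l.
Proof. by elim: l => [|a l IH] /=; rewrite ?bf_botE ?bf_orE ?IH. Qed.

Lemma PL_and_all l : {in l, forall a, inPL set_and_or_top_bot a} ->
  inPL set_and_or_top_bot (and_all l).
Proof.
elim: l => [|a l IH] Ol /=; first by split=> //; do 2 right; left.
split=> //; first by left.
by split; [apply: Ol; rewrite mem_head | split=> //; apply: IH => b bl; apply/Ol/mem_behead].
Qed.

Lemma PL_or_all l : {in l, forall a, inPL set_and_or_top_bot a} ->
  inPL set_and_or_top_bot (or_all l).
Proof.
elim: l => [|a l IH] Ol /=; first by split=> //; do 3 right.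
split=> //; first by right; left.
by split; [apply: Ol; rewrite mem_head | split=> //; apply: IH => b bl; apply/Ol/mem_behead].
Qed.

(* By monotonicity, [f] is the disjunction over its true points [a] of the
   conjunction of the variables true in [a]. *)
Lemma mono_clone_and_or p f : represents p f -> mono p -> clone set_and_or_top_bot f.
Proof.
move=> p_f mono_p; pose n := arity f.
have mono_f (t1 t2 : n.-tuple bool) : (forall i, tnth t1 i -> tnth t2 i) ->
    tagged f t1 -> tagged f t2.
  move=> t12; have := p_f (fun j => tnth t1 (inord j)).
  have := p_f (fun j => tnth t2 (inord j)).
  by rewrite !tuple_inord => <- <-; apply: mono_p => j; apply: t12.
pose conj (a : n.-tuple bool) := and_all [seq Var (val i) | i <- enum 'I_n & tnth a i].
pose dnf := or_all [seq conj a | a <- enum {: n.-tuple bool} & tagged f a].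
apply: (@represented_clone _ dnf).
  by apply: PL_or_all => _ /mapP[t _ ->]; apply: PL_and_all => _ /mapP[i _ ->].
move=> V; rewrite eval_or_all; apply/hasP/idP => [[_ /mapP[a + ->]]|fV].
  rewrite mem_filter eval_and_all => /andP[fa _] /allP conj_a.
  apply: (mono_f a) fa => i ai; rewrite tnth_mktuple.
  by apply: (conj_a (Var i)); apply: map_f; rewrite mem_filter ai mem_enum.
exists (conj [tuple V i | i < n]).
  by apply: map_f; rewrite mem_filter fV mem_enum.
rewrite eval_and_all; apply/allP => _ /mapP[i + ->]; rewrite mem_filter => /andP[Vi _].
by rewrite tnth_mktuple in Vi.
Qed.

Lemma ess_unary_clone_not_bot p f : represents p f -> ess_unary p -> clone set_not_bot f.
Proof.
move=> p_f [y [u p_u]].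
have [q Nq q_u] : exists2 q, inPL set_not_bot q & forall V, eval V q = u (V y).
  case u1: (u true); case u0: (u false).
  - exists (App bf_not [:: App bf_bot [:: Var y]]).
      by split=> //; [left | do !split=> //; right].
    by move=> V /=; rewrite bf_botE bf_notE; case: (V y).
  - by exists (Var y) => // V /=; case: (V y).
  - exists (App bf_not [:: Var y]); first by split=> //; left.
    by move=> V /=; rewrite bf_notE; case: (V y).
  - exists (App bf_bot [:: Var y]); first by split=> //; right.
    by move=> V /=; rewrite bf_botE; case: (V y).
by apply: (represented_clone Nq) => V; rewrite q_u -p_u p_f.
Qed.

Definition subsets (X : seq nat) : seq (seq nat) :=
  [seq mask (val m) X | m : (size X).-tuple bool].

Lemma size_subsets X : size (subsets X) = 2 ^ size X.
Proof. by rewrite size_image card_tuple card_bool. Qed.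

Lemma filter_subsets (U : pred nat) X : filter U X \in subsets X.
Proof. by rewrite filter_mask; apply/imageP; exists (map_tuple U (in_tuple X)). Qed.

Definition lower_asg (s : seq nat) : nat -> bool := fun z => z \in s.
Definition upper_asg (X s : seq nat) : nat -> bool := fun z => (z \in s) || (z \notin X).

Definition bound_examples (p : form) (X : seq nat) : seq example :=
  [seq (V, eval V p) | V <- [seq lower_asg s | s <- subsets X] ++
                            [seq upper_asg X s | s <- subsets X]].

Lemma size_bound_examples p X : size (bound_examples p X) = 2 ^ (size X).+1.
Proof.
by rewrite size_map size_cat !(size_map _ (subsets X)) size_subsets expnS mul2n addnn.
Qed.

Definition bound_determined (X : seq nat) (q : form) : Prop := forall U : nat -> bool,
  eval U q = eval (lower_asg (filter U X)) q \/ eval U q = eval (upper_asg X (filter U X)) q.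

Lemma mono_bound_determined X q : mono q -> bound_determined X q.
Proof.
move=> mono_q U; case qU: (eval U q); [right|left].
  apply/esym/(mono_q U) => // j Uj.
  by rewrite /upper_asg mem_filter Uj; case: (j \in X).
case q_lo: (eval (lower_asg (filter U X)) q) => //.
by rewrite -qU (mono_q _ U _ q_lo) // => j; rewrite /lower_asg mem_filter => /andP[].
Qed.

Lemma ess_unary_bound_determined X q : ess_unary q -> bound_determined X q.
Proof.
move=> [y [u q_u]] U; rewrite !q_u /lower_asg /upper_asg mem_filter.
by case: (y \in X); [left; rewrite andbT | case: (U y); [right | left]].
Qed.

Lemma bound_examples_char p X (L : form -> Prop) : {subset vars p <= X} ->
  (forall q, L q -> bound_determined X q) -> uniquely_characterizes (bound_examples p X) p L.
Proof.
move=> pX bdL; split.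
  by rewrite all_map (eq_all (a2 := predT)) ?all_predT // => V; apply: eqxx.
move=> q Lq; rewrite all_map all_cat !(all_map _ _ (subsets X)).
case/andP=> /allP fit_lo /allP fit_up U.
have /= /eqP q_lo := fit_lo _ (filter_subsets U X).
have /= /eqP q_up := fit_up _ (filter_subsets U X).
have p_lo : eval (lower_asg (filter U X)) p = eval U p.
  by apply: eq_in_eval => j /pX jX; rewrite /lower_asg mem_filter jX andbT.
have p_up : eval (upper_asg X (filter U X)) p = eval U p.
  by apply: eq_in_eval => j /pX jX; rewrite /upper_asg mem_filter jX andbT orbF.
by case: (bdL q Lq U) => ->; rewrite ?q_lo ?q_up.
Qed.

Lemma vars_subforms p x : x \in vars p -> Var x \in subforms p.
Proof.
elim/form_ind2: p => [y|f args IH] /=; first by rewrite !inE => /eqP->.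
case/flattenP=> _ /mapP[a a_args ->] xa; rewrite inE; apply/orP; right.
by apply/flattenP; exists (subforms a); [exact: map_f | exact: (Forall_mem IH a_args)].
Qed.

Lemma size_vars_dag p : size (undup (vars p)) <= dag_size p.
Proof.
rewrite /dag_size -(size_map Var); apply: uniq_leq_size.
  by rewrite map_inj_uniq ?undup_uniq // => x y [].
by move=> _ /mapP[x + ->]; rewrite !mem_undup; apply: vars_subforms.
Qed.

Lemma clone_le_bound_determined O X q :
  clone_le O set_and_or_top_bot \/ clone_le O set_not_bot -> inPL O q -> bound_determined X q.
Proof.
move=> [O_M|O_N] Oq.
- have [q' Mq' q'_q] := clone_le_translate O_M Oq.
  apply: mono_bound_determined => V W VW; rewrite -!q'_q; exact: PL_and_or_mono.
- have [q' Nq' q'_q] := clone_le_translate O_N Oq.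
  apply: ess_unary_bound_determined.
  by have [y [u q'_u]] := PL_not_bot_ess_unary Nq'; exists y, u => V; rewrite -q'_q.
Qed.

Lemma clone_le_bound_examples_char O (L : form -> Prop) p :
  clone_le O set_and_or_top_bot \/ clone_le O set_not_bot -> (forall q, L q -> inPL O q) ->
  uniquely_characterizes (bound_examples p (undup (vars p))) p L.
Proof.
move=> O_c1 L_PL; apply: bound_examples_char => [j|q /L_PL]; first by rewrite mem_undup.
exact: clone_le_bound_determined.
Qed.

Definition env (x y z : bool) : nat -> bool :=
  fun j => if j == 1 then y else if j == 2 then z else x.

Lemma env_const x : env x x x =1 fun=> x.
Proof. by move=> j; rewrite /env; case: (j == 1); case: (j == 2). Qed.

Definition cancellation (psi : form) : Prop :=
  (forall V, V 1 = V 2 -> eval V psi = eval (fun=> V 0) psi) /\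
  exists x y z, eval (env x y z) psi != eval (fun=> x) psi.

Definition has_cancellation (O : BF -> Prop) : Prop :=
  exists2 psi, inPL O psi & cancellation psi.

Inductive term3 := T0 | T1 | T2 | TApp of term3 & term3 & term3.

Fixpoint eval_term3 (g : bool -> bool -> bool -> bool) (x y z : bool) (t : term3) : bool :=
  match t with
  | T0 => x | T1 => y | T2 => z
  | TApp a b c => g (eval_term3 g x y z a) (eval_term3 g x y z b) (eval_term3 g x y z c)
  end.

Lemma eq_eval_term3 g g' : (forall x y z, g x y z = g' x y z) ->
  forall x y z t, eval_term3 g x y z t = eval_term3 g' x y z t.
Proof. by move=> gg' x y z; elim=> //= a -> b -> c ->. Qed.

Definition bools : seq bool := [:: false; true].

Lemma mem_bools b : b \in bools. Proof. by case: b. Qed.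

Definition cancelling_term3 g t : bool :=
  all (fun x => all (fun y => eval_term3 g x y y t == eval_term3 g x x x t) bools) bools &&
  has (fun x => has (fun y => has (fun z =>
    eval_term3 g x y z t != eval_term3 g x x x t) bools) bools) bools.

(* Every ternary [g] with [g 0 0 1 = true] and [g 1 0 1 = false], except [~~ x],
   is made cancelling by one of these terms; the list was found by computer search. *)
Definition cancel_candidates : seq term3 :=
  [:: TApp T0 T1 T2; TApp T2 (TApp T1 T1 T0) T0; TApp T0 T2 (TApp T1 T0 T0);
      TApp T2 T0 T1; TApp T1 T1 T2; TApp (TApp T0 T1 T0) T0 T2;
      TApp T0 T2 (TApp T0 T1 T1); TApp (TApp T0 T1 T0) T1 T2;
      TApp T1 (TApp T0 T0 T1) T2; TApp (TApp T0 T0 T1) T1 T2;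
      TApp T2 (TApp T0 T0 T1) T0; TApp (TApp T1 T0 T1) T0 T2; TApp T1 T2 T0;
      TApp T0 (TApp T0 T0 T1) T2; TApp (TApp T0 T0 T1) T0 T2].

Definition table3 (b0 b1 b2 b3 b4 b5 b6 b7 : bool) (x y z : bool) : bool :=
  match x, y, z with
  | false, false, false => b0 | false, false, true => b1
  | false, true, false => b2 | false, true, true => b3
  | true, false, false => b4 | true, false, true => b5
  | true, true, false => b6 | true, true, true => b7
  end.

Lemma table3_neg_or_cancelling (b0 b1 b2 b3 b4 b5 b6 b7 : bool) : b1 -> ~~ b5 ->
  let g := table3 b0 b1 b2 b3 b4 b5 b6 b7 in
  all (fun x => all (fun y => all (fun z => g x y z == ~~ x) bools) bools) bools ||
  has (cancelling_term3 g) cancel_candidates.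
Proof. by move: b0 b1 b2 b3 b4 b5 b6 b7; do 8!case. Qed.

Lemma ternary_neg_or_cancelling (g : bool -> bool -> bool -> bool) :
  g false false true -> ~~ g true false true ->
  (forall x y z, g x y z = ~~ x) \/ exists t, cancelling_term3 g t.
Proof.
move=> g001 g101; have := table3_neg_or_cancelling (g false false false) (g false true false)
  (g false true true) (g true false false) (g true true false) (g true true true) g001 g101.
have g_table x y z : g x y z = table3 (g false false false) (g false false true)
  (g false true false) (g false true true) (g true false false) (g true false true)
  (g true true false) (g true true true) x y z by case: x; case: y; case: z.
case/orP=> [neg_g|/(has_nthP T0)[i _ canc_i]]; [left|right].
  move=> x y z; rewrite g_table; apply/eqP.
  move/allP: neg_g => /(_ x (mem_bools x)) /allP /(_ y (mem_bools y)).
  by move=> /allP /(_ z (mem_bools z)).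
exists (nth T0 cancel_candidates i); move: canc_i.
by rewrite /cancelling_term3 /= !(eq_eval_term3 g_table).
Qed.

Fixpoint term3_formula (g : form) (t : term3) : form :=
  match t with
  | T0 => Var 0 | T1 => Var 1 | T2 => Var 2
  | TApp a b c => subst (fun j => if j == 1 then term3_formula g b
                                  else if j == 2 then term3_formula g c
                                  else term3_formula g a) g
  end.

Lemma eval_term3_formula g t U :
  eval U (term3_formula g t) =
  eval_term3 (fun x y z => eval (env x y z) g) (U 0) (U 1) (U 2) t.
Proof.
elim: t => //= a IHa b IHb c IHc; rewrite eval_subst -IHa -IHb -IHc.
by apply: eq_eval => j; rewrite /env; case: (j == 1); case: (j == 2).
Qed.

Lemma inPL_term3_formula O g t : inPL O g -> inPL O (term3_formula g t).
Proof.
move=> Og; elim: t => //= a IHa b IHb c IHc; apply: inPL_subst => // j.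
by case: (j == 1); case: (j == 2).
Qed.

Lemma cancelling_term3_cancellation g t :
  cancelling_term3 (fun x y z => eval (env x y z) g) t -> cancellation (term3_formula g t).
Proof.
case/andP=> /allP canc_eq /hasP[x _ /hasP[y _ /hasP[z _ canc_neq]]]; split.
  move=> V V12; rewrite !eval_term3_formula /= -V12.
  by move: (canc_eq _ (mem_bools (V 0))) => /allP /(_ _ (mem_bools (V 1))) /eqP.
by exists x, y, z; rewrite !eval_term3_formula.
Qed.

Definition mixenv (V W : nat -> bool) (x y z : bool) : nat -> bool :=
  fun j => if V j then z else if W j then x else y.

(* Collapsing the variables of [p] according to [V <= W] yields a ternary
   function that maps 001 to 1 and 101 to 0. *)
Lemma mono_violation_neg_or_cancel O p (V W : nat -> bool) : inPL O p ->
  (forall j, V j -> W j) -> eval V p -> ~~ eval W p ->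
  has_cancellation O \/ forall x y z, eval (mixenv V W x y z) p = ~~ x.
Proof.
move=> Op VW pV pW.
pose g := subst (fun j => Var (if V j then 2 else if W j then 0 else 1)) p.
have g_mix x y z : eval (env x y z) g = eval (mixenv V W x y z) p.
  by rewrite eval_subst; apply: eq_eval => j; rewrite /mixenv /env; case: (V j); case: (W j).
have g001 : eval (env false false true) g.
  by rewrite g_mix (eq_eval _ (W := V)) // => j; rewrite /mixenv; case: (V j); case: (W j).
have g101 : ~~ eval (env true false true) g.
  rewrite g_mix (eq_eval _ (W := W)) // => j; rewrite /mixenv.
  by case Vj: (V j); [rewrite (VW j Vj) | case: (W j)].
have [g_neg|[t canc_t]] :=
  @ternary_neg_or_cancelling (fun x y z => eval (env x y z) g) g001 g101.
  by right=> x y z; rewrite -g_mix g_neg.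
left; exists (term3_formula g t); first exact/inPL_term3_formula/inPL_subst.
exact: cancelling_term3_cancellation.
Qed.

Lemma nonmono_witness p : ~ mono p ->
  exists V W : nat -> bool, [/\ forall j, V j -> W j, eval V p & ~~ eval W p].
Proof.
move=> nmono_p; apply: NNPP => no_witness; apply: nmono_p => V W VW pV.
by apply/negPn/negP => pW; apply: no_witness; exists V, W.
Qed.

Lemma mono_violation_flip_in q (L : seq nat) (V W : nat -> bool) :
  (forall j, j \notin L -> V j = W j) -> (forall j, V j -> W j) -> eval V q -> ~~ eval W q ->
  exists V' i, [/\ ~~ V' i, eval V' q & ~~ eval [eta V' with i |-> true] q].
Proof.
elim: L V => [|a L IH] V VW_out VW qV qW.
  by move: qW; rewrite (eq_eval (W := V)) ?qV // => j; rewrite VW_out.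
have VW_outL : V a = W a -> forall j, j \notin L -> V j = W j.
  move=> Va_Wa j; case: (eqVneq j a) => [-> //|j_a jL].
  by apply: VW_out; rewrite inE negb_or j_a.
case Va: (V a); first by apply: (IH V) => //; apply: VW_outL; rewrite Va (VW a Va).
case Wa: (W a); last by apply: (IH V) => //; apply: VW_outL; rewrite Va Wa.
case q_flip: (eval [eta V with a |-> true] q); last by exists V, a; rewrite Va q_flip.
apply: (IH [eta V with a |-> true]) => //= j; case: (eqVneq j a) => [-> //|j_a].
  by move=> jL; apply: VW_out; rewrite inE negb_or j_a.
exact: VW.
Qed.

Lemma nonmono_flip q : ~ mono q ->
  exists V i, [/\ ~~ V i, eval V q & ~~ eval [eta V with i |-> true] q].
Proof.
case/nonmono_witness=> V [W [VW qV qW]].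
pose W' j := if j \in vars q then W j else V j.
apply: (@mono_violation_flip_in q (vars q) V W') => //.
- by move=> j; rewrite /W' => /negbTE ->.
- by move=> j Vj; rewrite /W'; case: ifP => // _; apply: VW.
- by rewrite (eq_in_eval (W := W)) // => j; rewrite /W' => ->.
Qed.

Lemma nonmono_neg_or_cancel O p : inPL O p -> ~ mono p ->
  has_cancellation O \/ exists2 neg, inPL O neg & forall U, eval U neg = ~~ U 0.
Proof.
move=> Op /nonmono_witness[V [W [VW pV pW]]].
case: (mono_violation_neg_or_cancel Op VW pV pW) => [|p_neg]; [by left | right].
exists (subst (fun=> Var 0) p); first exact: inPL_subst.
move=> U; rewrite eval_subst -(p_neg (U 0) (U 0) (U 0)).
by apply: eq_eval => j; rewrite /mixenv; case: (V j); case: (W j).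
Qed.

Lemma non_ess_unary_takes p b : ~ ess_unary p -> exists V, eval V p = b.
Proof.
move=> neu_p; apply: NNPP => p_avoids_b; apply: neu_p; exists 0, (fun=> ~~ b) => V.
by case pV: (eval V p); case: b p_avoids_b pV => // p_avoids_b pV; case: p_avoids_b; exists V.
Qed.

Section Negation.

Variables (O : BF -> Prop) (neg : form).
Hypotheses (O_neg : inPL O neg) (eval_neg : forall U, eval U neg = ~~ U 0).

Definition negate (q : form) : form := subst (fun=> q) neg.

Lemma eval_negate U q : eval U (negate q) = ~~ eval U q.
Proof. by rewrite eval_subst eval_neg. Qed.

Lemma inPL_negate q : inPL O q -> inPL O (negate q).
Proof. by move=> Oq; apply: inPL_subst. Qed.

Lemma non_ess_unary_nonmono p : inPL O p -> ~ ess_unary p ->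
  exists2 q, inPL O q & ~ mono q /\ ~ ess_unary q.
Proof.
move=> Op neu_p; have neu_negp : ~ ess_unary (negate p).
  move=> [y [u negp_u]]; apply: neu_p; exists y, (negb \o u) => V.
  by rewrite /= -negp_u eval_negate negbK.
case: (classic (mono p)) => [mono_p|]; last by exists p.
exists (negate p); first exact: inPL_negate.
split=> // mono_negp.
have [V1 /negbT pV1] := non_ess_unary_takes false neu_p.
have [W1 pW1] := non_ess_unary_takes true neu_p.
have p_meet : ~~ eval (fun j => V1 j && W1 j) p.
  by apply: contra pV1; apply: mono_p => j /andP[].
have le_meet j : V1 j && W1 j -> W1 j by case/andP.
by have := mono_negp _ _ le_meet; rewrite !eval_negate p_meet pW1 => /(_ isT).
Qed.

(* Negating the variables [j <> i] with [Z j] keeps the flip of [V] at [i] a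
   monotonicity violation, and collapsing it evaluates [q] at [Z] to [~~ Z i]. *)
Lemma nonmono_ess_unary_or_cancel q : inPL O q -> ~ mono q ->
  has_cancellation O \/ ess_unary q.
Proof.
move=> Oq /nonmono_flip[V [i [Vi qV qVi]]].
case: (classic (has_cancellation O)) => [|no_canc]; [by left | right].
exists i, negb => Z.
pose M := [eta Z with i |-> false].
pose xorM (U : nat -> bool) j := M j (+) U j.
pose qM := subst (fun j => if M j then negate (Var j) else Var j) q.
have qM_xorM U : eval U qM = eval (xorM U) q.
  by rewrite eval_subst; apply: eq_eval => j; rewrite /xorM; case: (M j); rewrite ?eval_negate.
have xorMK U : xorM (xorM U) =1 U by move=> j; rewrite /xorM addKb.
have Oq_M : inPL O qM by apply: inPL_subst => // j; case: (M j) => //; apply: inPL_negate.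
have qM_V : eval (xorM V) qM by rewrite qM_xorM (eq_eval _ (xorMK V)).
have qM_Vi : ~~ eval (xorM [eta V with i |-> true]) qM.
  by rewrite qM_xorM (eq_eval _ (xorMK _)).
have le_V_Vi j : xorM V j -> xorM [eta V with i |-> true] j.
  by rewrite /xorM /M /=; case: (eqVneq j i) => [->|]; rewrite ?(negbTE Vi).
case: (mono_violation_neg_or_cancel Oq_M le_V_Vi qM_V qM_Vi) => [//|qM_neg].
rewrite -(qM_neg (Z i) false false) qM_xorM; apply: eq_eval => j.
rewrite /xorM /mixenv /M /=; case: (eqVneq j i) => [->|_]; first by rewrite (negbTE Vi).
by case: (V j); case: (Z j).
Qed.

End Negation.

Lemma nonmono_non_ess_unary_cancel O p1 p2 : inPL O p1 -> ~ mono p1 ->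
  inPL O p2 -> ~ ess_unary p2 -> has_cancellation O.
Proof.
move=> Op1 nmono_p1 Op2 neu_p2.
case: (nonmono_neg_or_cancel Op1 nmono_p1) => [//|[neg O_neg eval_neg]].
have [q Oq [nmono_q neu_q]] := non_ess_unary_nonmono O_neg eval_neg Op2 neu_p2.
by case: (nonmono_ess_unary_or_cancel O_neg eval_neg Oq nmono_q).
Qed.

Lemma not_clone_le_has_cancellation O :
  ~ (clone_le O set_and_or_top_bot \/ clone_le O set_not_bot) -> has_cancellation O.
Proof.
move=> not_c1.
have [f1 [Of1 Mf1]] : exists f, clone O f /\ ~ clone set_and_or_top_bot f.
  by apply: NNPP => no_f; apply: not_c1; left => f Of; apply: NNPP => Mf; apply: no_f; exists f.
have [f2 [Of2 Nf2]] : exists f, clone O f /\ ~ clone set_not_bot f.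
  by apply: NNPP => no_f; apply: not_c1; right => f Of; apply: NNPP => Nf; apply: no_f; exists f.
have [p1 Op1 p1_f1] := clone_represented Of1.
have [p2 Op2 p2_f2] := clone_represented Of2.
apply: (nonmono_non_ess_unary_cancel Op1 _ Op2).
  by move=> /(mono_clone_and_or p1_f1).
by move=> /(ess_unary_clone_not_bot p2_f2).
Qed.

Lemma indistinguishable_pair (E : seq example) (L : seq nat) :
  uniq L -> 2 ^ size E < size L ->
  exists a b, [/\ a \in L, b \in L, a != b & [seq e.1 a | e <- E] = [seq e.1 b | e <- E]].
Proof.
move=> uniq_L size_L.
pose col j : (size E).-tuple bool := map_tuple (fun e : example => e.1 j) (in_tuple E).
have /(uniqPn (col 0))[i [j [lt_ij lt_j col_ij]]] : ~~ uniq (map col L).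
  apply/negP => /card_uniqP card_L; move: size_L; rewrite -(size_map col) -card_L.
  by rewrite ltnNge -[in X in _ <= X]card_bool -card_tuple max_card.
have lt_i : i < size L by rewrite size_map in lt_j; apply: ltn_trans lt_ij lt_j.
rewrite size_map in lt_j; rewrite !(nth_map 0) // in col_ij.
exists (nth 0 L i), (nth 0 L j); split; rewrite ?mem_nth ?nth_uniq // ?neq_ltn ?lt_ij //.
exact: (congr1 val col_ij).
Qed.

Definition rename3 (psi : form) (a b : nat) : form :=
  subst (fun j => Var (if j == 1 then a else if j == 2 then b else 0)) psi.

Lemma eval_rename3 V psi a b : eval V (rename3 psi a b) = eval (env (V 0) (V a) (V b)) psi.
Proof.
by rewrite eval_subst; apply: eq_eval => j; rewrite /env; case: (j == 1); case: (j == 2).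
Qed.

Lemma inPL_rename3 O psi a b : inPL O psi -> inPL O (rename3 psi a b).
Proof. by move=> Opsi; apply: inPL_subst. Qed.

Lemma vars_rename3 psi a b : {subset vars (rename3 psi a b) <= [:: 0; a; b]}.
Proof.
move=> j /vars_subst[i]; rewrite inE => /eqP->.
by case: (i == 1); case: (i == 2); rewrite !inE eqxx ?orbT.
Qed.

(* Pigeonhole: two of the [n + 1] variables, [a] and [b], take the same value in
   every example, and where [a] and [b] agree [psi] collapses to [rename3 psi 0 0]. *)
Lemma cancellation_fools_examples psi (E : seq example) n : cancellation psi ->
  2 ^ size E <= n -> all (fits (rename3 psi 0 0)) E ->
  exists a b, [/\ a \in iota 1 n.+1, b \in iota 1 n.+1,
    all (fits (rename3 psi a b)) E & ~ Defs.equiv (rename3 psi a b) (rename3 psi 0 0)].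
Proof.
move=> [psi_eq [x [y [z psi_neq]]]] size_E fit_E.
have [|a [b [aL bL a_b E_ab]]] := @indistinguishable_pair E (iota 1 n.+1) (iota_uniq _ _).
  by rewrite size_iota.
have a0 : a != 0 by rewrite -lt0n; move: aL; rewrite mem_iota => /andP[].
have b0 : b != 0 by rewrite -lt0n; move: bL; rewrite mem_iota => /andP[].
exists a, b; split=> //.
  elim: E E_ab fit_E {size_E} => //= e E IH [e_ab E_ab] /andP[fit_e fit_E].
  rewrite IH // andbT; move: fit_e; rewrite /fits !eval_rename3 e_ab (eq_eval _ (env_const _)).
  by rewrite (psi_eq (env _ _ _)).
pose V j := if j == a then y else if j == b then z else x.
have [Va Vb V0] : [/\ V a = y, V b = z & V 0 = x].
  by rewrite /V !eqxx ![_ == a]eq_sym ![0 == _]eq_sym (negbTE a_b) (negbTE a0) (negbTE b0).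
move/(_ V); rewrite !eval_rename3 Va Vb V0 (eq_eval _ (env_const _)) => psi_eq'.
by rewrite psi_eq' eqxx in psi_neq.
Qed.

Lemma cancellation_no_char O : has_cancellation O ->
  exists2 p, inPL O p & forall E, ~ uniquely_characterizes E p (inPL O).
Proof.
move=> [psi Opsi canc_psi]; exists (rename3 psi 0 0); first exact: inPL_rename3.
move=> E [fit_E char_E].
have [a [b [_ _ fit_ab not_equiv]]] := cancellation_fools_examples canc_psi (leqnn _) fit_E.
exact/not_equiv/char_E/fit_ab/inPL_rename3.
Qed.

Lemma cancellation_no_bounded_char O (f : nat -> nat) : has_cancellation O ->
  exists prop p, inPLprop O prop p /\ forall E, size E <= f (dag_size p) ->
    ~ uniquely_characterizes E p (inPLprop O prop).
Proof.
move=> [psi Opsi canc_psi]; pose n := 2 ^ f (dag_size (rename3 psi 0 0)).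
have PL_rename3 a b : a < n.+2 -> b < n.+2 -> inPLprop O (iota 0 n.+2) (rename3 psi a b).
  move=> a_n b_n; split; first exact: inPL_rename3.
  by move=> j; rewrite mem_iota add0n => /vars_rename3; rewrite !inE => /or3P[] /eqP->.
exists (iota 0 n.+2), (rename3 psi 0 0).
split=> [|E size_E [fit_E char_E]]; first exact: PL_rename3.
have [a [b [aL bL fit_ab not_equiv]]] :=
  cancellation_fools_examples canc_psi (leq_pexp2l (isT : 0 < 2) size_E) fit_E.
apply/not_equiv/char_E => //; apply: PL_rename3.
- by move: aL; rewrite mem_iota => /andP[].
- by move: bL; rewrite mem_iota => /andP[].
Qed.

Theorem theorem3p19 (O : BF -> Prop) :
  let c1 := clone_le O set_and_or_top_bot \/ clone_le O set_not_bot in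
  let c2 := forall p, inPL O p ->
              exists E : seq example, uniquely_characterizes E p (inPL O) in
  let c3 := exists f : nat -> nat, forall (prop : seq nat) (p : form),
              inPLprop O prop p ->
              exists E : seq example, size E <= f (dag_size p) /\
                uniquely_characterizes E p (inPLprop O prop) in
  (c1 <-> c2) /\ (c1 <-> c3).
Proof.
move=> c1 c2 c3; split; split.
- move=> O_c1 p _; exists (bound_examples p (undup (vars p))).
  exact: clone_le_bound_examples_char O_c1 (fun q Oq => Oq).
- move=> O_c2; apply: NNPP => /not_clone_le_has_cancellation.
  case/cancellation_no_char=> p Op no_char.
  by have [E] := O_c2 p Op; apply: no_char.
- move=> O_c1; exists (fun n => 2 ^ n.+1) => prop p _.
  exists (bound_examples p (undup (vars p))); split.
    by rewrite size_bound_examples leq_pexp2l // ltnS size_vars_dag.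
  exact: clone_le_bound_examples_char O_c1 (fun q Oq => proj1 Oq).
- move=> [f O_c3]; apply: NNPP => /not_clone_le_has_cancellation.
  move=> /(cancellation_no_bounded_char f)[prop [p [Op no_char]]].
  by have [E [size_E]] := O_c3 prop p Op; apply: no_char.
Qed.
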